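(* For all integers $m\ge2$ and $j\ge0$, \[b_{\mathcal{G}}(m,\overline{m+j})=2q^{\binom{m+1}{2}+\frac{j(j+3)}{2}}{m-2\brack j}.\]
   Context: An overpartition is a partition in which the first occurrence of each part size may be overlined, with parts listed in non-increasing order with respect to $1<\bar1<2<\bar2<\cdots$. A part is of size $t$ if it is $t$ or $\bar t$, and $|\pi|$ is the sum of the sizes of the parts. For $m\ge1$, $\mathcal{G}(m)$ is the set of overpartitions $(\pi_1,\dots,\pi_m)$ such that for every $1\le i<m$, if $\pi_{i+1}$ has size $t$ then $\pi_i\in\{\overline{t+1},\,t+2\}$. $\mathcal{G}_2(m)$ is the subset of $\mathcal{G}(m)$ with smallest part $\pi_m\in\{1,\bar1\}$. $b_{\mathcal{G}}(m,\bar j)$ is $\sum q^{|\pi|}$ over $\pi\in\mathcal{G}_2(m)$ with largest part $\pi_1=\bar j$. The Gaussian binomial is ${M\brack N}=\frac{(q;q)_M}{(q;q)_N(q;q)_{M-N}}$ for $0\le N\le M$ and $0$ otherwise, where $(q;q)_n=\prod_{i=1}^n(1-q^i)$. *)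

From HB Require Import structures.
From mathcomp Require Import all_boot all_order all_algebra.
From mathcomp Require Import fraction.
Set Implicit Arguments. Unset Strict Implicit. Unset Printing Implicit Defensive.
Import Order.TTheory GRing.Theory Num.Theory.
Local Open Scope ring_scope.

(* A part of an overpartition: (size t, overlined?) ; (t,false) = t, (t,true) = \bar t. *)
Definition opart := (nat * bool)%type.

(* rank for the order 1 < \bar1 < 2 < \bar2 < ... *)
Definition prank (p : opart) : nat := (2 * p.1 + p.2)%N.

(* An overpartition, written as its list of parts (pi_1, ..., pi_m):
   all sizes positive, non-increasing for the order above, and for each size t
   at most one overlined part (necessarily the first occurrence of size t,
   since \bar t comes before t in non-increasing order). *)
Definition is_overpartition (s : seq opart) : bool :=
  [&& all (fun p => 0 < p.1)%N s,
      sorted (fun x y => prank y <= prank x)%N s &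
      all (fun p => count (pred1 (p.1, true)) s <= 1)%N s].

Definition opweight (s : seq opart) : nat := sumn (map fst s).

Definition inG (m : nat) (s : seq opart) : bool :=
  [&& is_overpartition s, size s == m &
      [forall i : 'I_m.-1,
         let t := (nth (0%N, false) s i.+1).1 in
         (nth (0%N, false) s i == (t.+1, true)) ||
         (nth (0%N, false) s i == (t.+2, false))]].

Definition inG2 (m : nat) (s : seq opart) : bool :=
  inG m s && ((nth (0%N, false) s m.-1).1 == 1%N).

Definition tuple_to_seq (m k : nat) (t : m.-tuple ('I_k * bool)) : seq opart :=
  map (fun p => (nat_of_ord p.1, p.2)) t.

(* Every such pi has all part sizes <= j (parts are non-increasing), so it is
   exactly enumerated (injectively) by m-tuples over 'I_(j+1) * bool. *)
Definition bG (m j : nat) : {poly rat} :=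
  \sum_(t : m.-tuple ('I_j.+1 * bool) |
        inG2 m (tuple_to_seq t) && (nth (0%N, false) (tuple_to_seq t) 0 == (j, true)))
     'X^(opweight (tuple_to_seq t)).

Notation RF := {fraction {poly rat}}.
Definition toRF (p : {poly rat}) : RF := @FracField.tofrac {poly rat} p.
Definition qvar : RF := toRF 'X.

Definition qpoch (n : nat) : RF := \prod_(i < n) (1 - qvar ^+ i.+1).

Definition gauss (M N : nat) : RF :=
  if (N <= M)%N then qpoch M / (qpoch N * qpoch (M - N)) else 0.

From mathcomp Require Import all_boot all_algebra fraction zify ring.
Set Implicit Arguments. Unset Strict Implicit. Unset Printing Implicit Defensive.
Import GRing.Theory.
Local Open Scope ring_scope.

(* An element of G_2(m) is a "chain": each part is determined by the next one
   (pi_i = \bar(t+1) or pi_i = t+2 when pi_(i+1) has size t) and the last part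
   is 1 or \bar1.  Hence a chain is encoded by the bit b saying whether the last
   part is overlined and a bit string e read top-down (bit 0: \bar(t+1), bit 1:
   t+2).  The top part has size 1 + |e| + #ones(e), and it is overlined iff the
   first bit is 0.  So the chains counted by b_G(m, \bar(m+j)) are exactly the
   encodings of (0 :: e, b) with |e| = m-2 and #ones(e) = j, b arbitrary. *)

Lemma qvarE (k : nat) : qvar ^+ k = toRF 'X^k.
Proof. by rewrite /qvar /toRF tofracXn. Qed.

Lemma toRFD (p r : {poly rat}) : toRF (p + r) = toRF p + toRF r.
Proof. exact: tofracD. Qed.

Lemma toRFM (p r : {poly rat}) : toRF (p * r) = toRF p * toRF r.
Proof. exact: tofracM. Qed.

Lemma toRF_nat (k : nat) : toRF k%:R = k%:R.
Proof. exact: rmorph_nat. Qed.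

Lemma one_sub_qpow_neq0 (i : nat) : 1 - qvar ^+ i.+1 != 0.
Proof.
rewrite qvarE /toRF -tofrac1 -tofracB tofrac_eq0 subr_eq0 eq_sym.
apply/eqP => /(congr1 (size : {poly rat} -> nat)).
by rewrite size_polyXn size_poly1.
Qed.

Lemma qpoch_neq0 (n : nat) : qpoch n != 0.
Proof. by apply/prodf_neq0 => i _; apply: one_sub_qpow_neq0. Qed.

Lemma qpochS (n : nat) : qpoch n.+1 = qpoch n * (1 - qvar ^+ n.+1).
Proof. by rewrite /qpoch big_ord_recr. Qed.

Lemma gauss_n0 (n : nat) : gauss n 0 = 1.
Proof. by rewrite /gauss subn0 /qpoch big_ord0 mul1r divff // qpoch_neq0. Qed.

Lemma gauss_nn (n : nat) : gauss n n = 1.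
Proof. by rewrite /gauss leqnn subnn /qpoch big_ord0 mulr1 divff // qpoch_neq0. Qed.

Lemma gauss_gt (n j : nat) : (n < j)%N -> gauss n j = 0.
Proof. by move=> ltnj; rewrite /gauss leqNgt ltnj. Qed.

(* The field identity behind q-Pascal, with c = (q;q)_(j+k+1), x = (q;q)_j,
   y = (q;q)_k, u = q^(j+1), v = q^(k+1). *)
Lemma split_fraction (F : fieldType) (c x y u v : F) :
  x != 0 -> y != 0 -> 1 - u != 0 -> 1 - v != 0 ->
  c * (1 - u * v) / (x * (1 - u) * (y * (1 - v))) =
  u * (c / (x * (1 - u) * y)) + c / (x * (y * (1 - v))).
Proof. by move=> x0 y0 u1 v1; field; rewrite x0 y0 u1 v1. Qed.

Lemma gauss_pascal (n j : nat) :
  gauss n.+1 j.+1 = qvar ^+ j.+1 * gauss n j.+1 + gauss n j.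
Proof.
case: (ltngtP j n) => [ltjn|ltnj|->]; last first.
- by rewrite gauss_nn gauss_gt // gauss_nn mulr0 add0r.
- by rewrite !gauss_gt ?mulr0 ?addr0 // ltnW.
have [k ->] : exists k, n = (j + k).+1 by exists (n - j.+1)%N; lia.
rewrite /gauss !ifT; try lia.
have -> : ((j + k).+2 - j.+1 = k.+1)%N by lia.
have -> : ((j + k).+1 - j.+1 = k)%N by lia.
have -> : ((j + k).+1 - j = k.+1)%N by lia.
rewrite (qpochS (j + k).+1) (qpochS j) (qpochS k).
have -> : qvar ^+ (j + k).+2 = qvar ^+ j.+1 * qvar ^+ k.+1.
  by rewrite -exprD addSn addnS.
by apply: split_fraction; rewrite ?qpoch_neq0 ?one_sub_qpow_neq0.
Qed.

Definition opart0 : opart := (0%N, false).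

Definition succ_part (x y : opart) : bool :=
  (x == (y.1.+1, true)) || (x == (y.1.+2, false)).

(* Nonempty part lists in which consecutive parts satisfy succ_part and whose
   last part has size 1: these will turn out to be the elements of G_2. *)
Fixpoint is_chain (s : seq opart) : bool :=
  if s is x :: s' then
    if s' is y :: _ then succ_part x y && is_chain s' else x.1 == 1%N
  else false.

Definition push_part (x : bool) (s : seq opart) : seq opart :=
  (((head opart0 s).1 + 1 + x)%N, ~~ x) :: s.

Definition chain_of_bits (e : seq bool) (b : bool) : seq opart :=
  foldr push_part [:: (1%N, b)] e.

(* The weight of chain_of_bits e b, which does not depend on b. *)
Fixpoint bits_weight (e : seq bool) : nat :=
  if e is x :: e' then (bits_weight e' + (size e' + count id e' + x).+2)%N
  else 1%N.

Lemma head_chain_of_bits (e : seq bool) (b : bool) :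
  (head opart0 (chain_of_bits e b)).1 = (1 + size e + count id e)%N.
Proof. by elim: e => [//|x e IH] /=; rewrite IH; case: x => /=; lia. Qed.

Lemma size_chain_of_bits (e : seq bool) (b : bool) :
  size (chain_of_bits e b) = (size e).+1.
Proof. by elim: e => [//|x e IH] /=; rewrite IH. Qed.

Lemma weight_chain_of_bits (e : seq bool) (b : bool) :
  opweight (chain_of_bits e b) = bits_weight e.
Proof.
elim: e => [|x e IH]; first by rewrite /opweight /= addn0.
rewrite /opweight /= -/(opweight _) IH head_chain_of_bits; case: x => /=; lia.
Qed.

Lemma chain_of_bits_inj (e e' : seq bool) (b b' : bool) :
  chain_of_bits e b = chain_of_bits e' b' -> e = e' /\ b = b'.
Proof.
elim: e e' => [|x e IH] [|x' e'] //=; first by case=> ->.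
- by move/(congr1 size) => /=; rewrite size_chain_of_bits.
- by move/(congr1 size) => /=; rewrite size_chain_of_bits.
by case=> _ /negb_inj -> /IH [-> ->].
Qed.

Lemma is_chain_of_bits (e : seq bool) (b : bool) : is_chain (chain_of_bits e b).
Proof.
elim: e => [//|x e IH] /=.
case E: (chain_of_bits e b) IH => [|y s] //= ->; rewrite andbT /succ_part.
by case: x; rewrite /= ?addn1 ?addn0 ?eqxx ?orbT.
Qed.

Lemma is_chainP (s : seq opart) : is_chain s -> exists e b, s = chain_of_bits e b.
Proof.
elim: s => [//|x [|y s] IH] /=.
  by case: x => [n b] /= /eqP ->; exists [::], b.
case/andP=> + /IH [e [b E]]; rewrite E.
have -> : y = head opart0 (chain_of_bits e b) by rewrite -E.
case/orP => /eqP ->.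
- by exists (false :: e), b; rewrite /= /push_part addn1 addn0.
- by exists (true :: e), b; rewrite /= /push_part; congr ((_, _) :: _); lia.
Qed.

Lemma succ_part_lt (x y : opart) : succ_part x y -> (y.1 < x.1)%N.
Proof. by case/orP => /eqP ->. Qed.

Lemma chain_sizes_le_head (s : seq opart) :
  is_chain s -> all (fun p => p.1 <= (head opart0 s).1)%N s.
Proof.
elim: s => [//|x [|y s] IH]; first by rewrite /= leqnn.
case/andP=> /succ_part_lt ltyx /IH /allP le_head.
apply/allP => p; rewrite inE => /orP [/eqP -> //|/le_head /=]; lia.
Qed.

Lemma chain_sizes_pos (s : seq opart) : is_chain s -> all (fun p => 0 < p.1)%N s.
Proof.
elim: s => [//|x [|y s] IH] /=; first by move/eqP ->.
by case/andP=> /succ_part_lt ltyx /IH /= /andP [-> ->]; rewrite !andbT; lia.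
Qed.

Lemma chain_sorted (s : seq opart) :
  is_chain s -> sorted (fun x y => prank y <= prank x)%N s.
Proof.
elim: s => [//|x [|y s] IH] //= /andP [xy /IH /= ->]; rewrite andbT.
by rewrite /prank; case/orP: xy => /eqP -> /=; case: (y.2) => /=; lia.
Qed.

Lemma chain_overlines_unique (s : seq opart) :
  is_chain s -> all (fun p => count (pred1 (p.1, true)) s <= 1)%N s.
Proof.
elim: s => [//|x [|y s] IH]; first by move=> _ /=; rewrite addn0 leq_b1.
case/andP=> /succ_part_lt ltyx cs; have {}cs : is_chain (y :: s) := cs.
have /allP le_head := chain_sizes_le_head cs.
have no_big t : (y.1 < t)%N -> count (pred1 (t, true)) (y :: s) = 0%N.
  move=> ltyt; apply/eqP; rewrite -leqn0 leqNgt -has_count.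
  by apply/hasP => -[p /le_head /= + /eqP pe]; rewrite pe /=; lia.
apply/allP => p; rewrite inE => /orP [/eqP ->|ps].
  by rewrite -cat1s count_cat no_big // addn0 /= addn0 leq_b1.
have := allP (IH cs) p ps; rewrite -cat1s count_cat /= addn0.
case: (x =P (p.1, true)) => [pe|]; last by rewrite add0n.
by have := le_head p ps; move: ltyx; rewrite pe /=; lia.
Qed.

Lemma chain_overpartition (s : seq opart) : is_chain s -> is_overpartition s.
Proof.
move=> cs; apply/and3P; split.
- exact: chain_sizes_pos.
- exact: chain_sorted.
- exact: chain_overlines_unique.
Qed.

Lemma is_chain_nth (s : seq opart) : is_chain s <->
  [/\ (0 < size s)%N, (nth opart0 s (size s).-1).1 = 1%N &
      forall i, (i.+1 < size s)%N -> succ_part (nth opart0 s i) (nth opart0 s i.+1)].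
Proof.
elim: s => [|x [|y s] IH]; first by split => // -[].
  by split => [/eqP h|[_ /= -> _]] //; split.
split => /=.
- by case/andP=> xy /IH [_ last1 succs]; split => // -[|i] //= /succs.
- case=> _ last1 succs; apply/andP; split; first exact: (succs 0%N).
  by apply/IH; split => // i lti; exact: (succs i.+1).
Qed.

Lemma inG2_is_chain (m : nat) (s : seq opart) : size s = m -> inG2 m s = is_chain s.
Proof.
move=> sz; apply/idP/idP.
- case/andP => /and3P [_ _ /forallP succs] /eqP last1; apply/is_chain_nth.
  split; [by move: last1; rewrite -sz; case: (s) | by rewrite sz |].
  move=> i lti; have lti' : (i < m.-1)%N by rewrite -sz; lia.
  exact: (succs (Ordinal lti')).
- move=> cs; have [/(_ cs) [_ last1 succs] _] := is_chain_nth s.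
  rewrite /inG2 /inG chain_overpartition //= sz eqxx /= -[in m.-1]sz last1 andbT.
  by apply/forallP => -[i lti] /=; apply: succs; rewrite sz; lia.
Qed.

Fixpoint bitseqs (n : nat) : seq (seq bool) :=
  if n is n'.+1 then [seq x :: e | x <- [:: false; true], e <- bitseqs n']
  else [:: [::]].

Lemma mem_bitseqs (n : nat) (e : seq bool) : (e \in bitseqs n) = (size e == n).
Proof.
elim: n e => [|n IH] e; first by case: e.
apply/allpairsP/idP => [[[x e'] [_ /= le' ->]]|]; first by rewrite /= eqSS -IH.
case: e => [//|x e] /=; rewrite eqSS -IH => le.
by exists (x, e); split => //; case: x.
Qed.

Lemma uniq_bitseqs (n : nat) : uniq (bitseqs n).
Proof.
elim: n => [//|n IH]; apply: (@allpairs_uniq _ _ _ (fun x e => x :: e)) => //.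
by move=> [x e] [x' e'] _ _ /= [-> ->].
Qed.

(* The chains with top part \bar(n+2+j) and n+2 parts. *)
Definition top_chains (n j : nat) : seq (seq opart) :=
  [seq chain_of_bits (false :: e) b
     | e <- [seq e <- bitseqs n | count id e == j], b <- [:: false; true]].

Lemma uniq_top_chains (n j : nat) : uniq (top_chains n j).
Proof.
apply: allpairs_uniq => //; first by rewrite filter_uniq // uniq_bitseqs.
by move=> [e b] [e' b'] _ _ /= /(congr1 behead) /chain_of_bits_inj [-> ->].
Qed.

Lemma size_top_chains (n j : nat) (s : seq opart) :
  s \in top_chains n j -> size s = n.+2.
Proof.
case/allpairsP => -[e b] [/=]; rewrite mem_filter mem_bitseqs.
by move=> /andP [_ /eqP <-] _ ->; rewrite (@size_chain_of_bits (false :: e)).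
Qed.

Lemma mem_top_chains (m j : nat) (s : seq opart) : (2 <= m)%N -> size s = m ->
  (s \in top_chains (m - 2) j) = is_chain s && (nth opart0 s 0 == ((m + j)%N, true)).
Proof.
move=> m2 sz; apply/idP/idP.
- case/allpairsP => -[e b] [/=]; rewrite mem_filter mem_bitseqs.
  move=> /andP [/eqP ones /eqP le] _ ->.
  rewrite (@is_chain_of_bits (false :: e)) /= /push_part /=; apply/eqP.
  by rewrite head_chain_of_bits le ones; congr (_, _); lia.
- case/andP => /is_chainP [e [b es]] top; subst s.
  move: sz; rewrite size_chain_of_bits; case: e top => [|x e] top /= sz; first lia.
  move: top; rewrite /push_part /=; case: x => /= /eqP [] // topsz.
  apply/allpairsP; exists (e, b); split => //=; last by case: (b).
  rewrite mem_filter mem_bitseqs; apply/andP; split; apply/eqP;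
    move: topsz; rewrite head_chain_of_bits; lia.
Qed.

Lemma bG_top_chains (m j : nat) : (2 <= m)%N ->
  bG m (m + j) = \sum_(s <- top_chains (m - 2) j) 'X^(opweight s).
Proof.
move=> m2; rewrite /bG -big_filter.
rewrite -(big_map (@tuple_to_seq m (m + j).+1) xpredT (fun s => 'X^(opweight s))).
apply: perm_big; apply: uniq_perm.
- rewrite map_inj_uniq ?filter_uniq ?index_enum_uniq //.
  move=> t1 t2 /inj_map eqt; apply: val_inj; apply: eqt.
  by move=> [a b] [c d] /= [/val_inj -> ->].
- exact: uniq_top_chains.
move=> s; apply/mapP/idP.
- case=> t; rewrite mem_filter => /andP [Qt _] ->.
  have sz : size (tuple_to_seq t) = m by rewrite size_map size_tuple.
  by rewrite mem_top_chains // -(inG2_is_chain sz).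
- move=> s_top; have sz : size s = m by rewrite (size_top_chains s_top); lia.
  move: (s_top); rewrite mem_top_chains // => /andP [cs top].
  have top_size : (head opart0 s).1 = (m + j)%N.
    by move: top; case: (s) => [|x s'] /= /eqP => [[]|->].
  have /allP le_top := chain_sizes_le_head cs; rewrite top_size in le_top.
  pose t := map (fun p : opart => ((inord p.1 : 'I_(m + j).+1), p.2)) s.
  have szt : size t == m by rewrite size_map sz.
  have ts : tuple_to_seq (Tuple szt) = s.
    rewrite /tuple_to_seq /= -map_comp -[RHS]map_id.
    by apply/eq_in_map => -[a c] /le_top /= lea; rewrite inordK.
  exists (Tuple szt) => //.
  by rewrite mem_filter mem_index_enum andbT ts (inG2_is_chain sz) cs.
Qed.

Definition bits_gf (n j : nat) : {poly rat} :=
  \sum_(e <- bitseqs n) (if count id e == j then 'X^(bits_weight e) else 0).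

(* The two choices of the bottom bit, and the fixed top bit 0. *)
Lemma sum_top_chains (n j : nat) :
  \sum_(s <- top_chains n j) 'X^(opweight s) = 2%:R * 'X^((n + j).+2) * bits_gf n j.
Proof.
rewrite /top_chains big_allpairs_dep /bits_gf big_filter big_mkcond mulr_sumr.
apply: eq_big_seq => e; rewrite mem_bitseqs => /eqP le.
case: eqP => [ones|_]; last by rewrite mulr0.
rewrite big_cons big_seq1 !weight_chain_of_bits /= le ones addn0 exprD.
by rewrite -mulrA mulr_natl mulr2n mulrC.
Qed.

Lemma bits_gf0 (j : nat) : bits_gf 0 j = if j == 0%N then 'X else 0.
Proof. by rewrite /bits_gf /= big_seq1 expr1; case: j. Qed.

(* Splitting off the top bit. *)
Lemma bits_gfS (n j : nat) : bits_gf n.+1 j =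
  'X^(n + 2 + j) * (bits_gf n j + (if j is j'.+1 then bits_gf n j' else 0)).
Proof.
rewrite /bits_gf
  (_ : bitseqs n.+1 = [seq x :: e | x <- [:: false; true], e <- bitseqs n]) //.
rewrite big_allpairs_dep big_cons big_seq1 mulrDr.
congr (_ + _); case: j => [|j]; try by rewrite mulr0; apply: big1.
all: rewrite mulr_sumr; apply: eq_big_seq => e; rewrite mem_bitseqs => /eqP le /=.
all: rewrite ?add0n ?add1n ?eqSS; case: eqP => [ones|_]; last by rewrite mulr0.
all: by rewrite le ones -exprD; congr ('X^_); lia.
Qed.

Lemma binS2 (k : nat) : 'C(k.+1, 2) = ('C(k, 2) + k)%N.
Proof. by rewrite binS bin1. Qed.

Lemma expr_regroup (R : comNzRingType) (x g1 g0 : R) (a c d : nat) :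
  x ^+ c * (x ^+ (a + d) * g1 + x ^+ a * g0) = x ^+ (a + c) * (x ^+ d * g1 + g0).
Proof. rewrite !exprD; ring. Qed.

Lemma bits_gf_gauss (n j : nat) :
  toRF (bits_gf n j) = qvar ^+ ('C(n.+2, 2) + 'C(j.+1, 2)) * gauss n j.
Proof.
elim: n j => [|n IH] [|j].
- by rewrite bits_gf0 gauss_n0 mulr1.
- by rewrite bits_gf0 gauss_gt // mulr0 /toRF tofrac0.
- rewrite bits_gfS addr0 toRFM IH -qvarE.
  rewrite !gauss_n0 !mulr1 -exprD; congr (_ ^+ _); rewrite (binS2 n.+2); lia.
rewrite bits_gfS toRFM toRFD !IH -qvarE gauss_pascal.
have -> : ('C(n.+2, 2) + 'C(j.+2, 2) = ('C(n.+2, 2) + 'C(j.+1, 2)) + j.+1)%N.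
  by rewrite (binS2 j.+1); lia.
have -> : ('C(n.+3, 2) + 'C(j.+2, 2) = ('C(n.+2, 2) + 'C(j.+1, 2)) + (n + 2 + j.+1))%N.
  by rewrite (binS2 j.+1) (binS2 n.+2); lia.
exact: expr_regroup.
Qed.

Lemma half_j_jplus3 (j : nat) : (j * (j + 3) %/ 2 = 'C(j.+1, 2) + j)%N.
Proof.
have twice_bin : (2 * 'C(j.+1, 2) = j.+1 * j)%N.
  by elim: j => [//|j IH]; rewrite binS2 mulnDr IH; lia.
have -> : (j * (j + 3) = 2 * ('C(j.+1, 2) + j))%N by rewrite [RHS]mulnDr twice_bin; lia.
by rewrite mulKn.
Qed.

Theorem mainTheorem14 (m j : nat) : (2 <= m)%N ->
  toRF (bG m (m + j)) =
    2%:R * qvar ^+ ('C(m.+1, 2) + (j * (j + 3)) %/ 2)%N * gauss (m - 2) j.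
Proof.
case: m => [|[|n]] // _.
rewrite bG_top_chains // subSS subSS subn0 sum_top_chains.
rewrite 2!toRFM toRF_nat -qvarE bits_gf_gauss.
rewrite mulrA -(mulrA 2%:R) -exprD half_j_jplus3.
by congr (_ * _ ^+ _ * _); rewrite (binS2 n.+2); lia.
Qed.
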